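(* Let $\kappa$ be a gravitational lens satisfying the conditions in the context, and let $\alpha(x)=\frac{2}{x}\int_0^x\kappa(t)\,t\,dt$ for $x>0$ be its normalized deflection angle. An Einstein ring is a radius $x_E>0$ with $\alpha(x_E)=x_E$. If an Einstein ring exists, then there is exactly one.
   Context: A gravitational lens (in a single lens plane) is given by a normalized surface density $\kappa$ on the plane $\mathbb{R}^2$ satisfying: (i) Continuity: $\kappa:\mathbb{R}^2\to[0,\infty)$ is continuous, except possibly at the origin for singular lenses. (ii) Circular symmetry: $\kappa$ depends only on the radius $x=\|\mathbf{x}\|$; write $\kappa=\kappa(x)$. (iii) Finiteness: $\kappa(x)<\infty$ for $x>0$; $\kappa(0)=1/C_1$ for a constant $C_1\ge 0$ (so $\kappa(0)=+\infty$ when $C_1=0$); and $\lim_{x\to\infty}\kappa(x)\,x=C_2$ for a constant $0\le C_2<\infty$. (iv) Self-gravitation: $\kappa(x)<\bar\kappa(x)$ for $x>0$, where $\bar\kappa(x)=\frac{2}{x^2}\int_0^x\kappa(t)\,t\,dt$. The lens is called singular if and only if $C_1=0$, and non-singular otherwise. The deflection angle $\alpha$ is the radial derivative of the lensing potential $f$ solving $\Delta f=2\kappa$, which for a circularly symmetric lens is $\alpha(x)=\frac{2}{x}\int_0^x\kappa(t)\,t\,dt$. *)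

From Stdlib Require Import Reals.
From Coquelicot Require Import Coquelicot.
Open Scope R_scope.

Definition mass (kappa : R -> R) (x : R) : R :=
  RInt_gen (fun t => kappa t * t) (at_right 0) (at_point x).

Definition kbar (kappa : R -> R) (x : R) : R := 2 / x ^ 2 * mass kappa x.

Definition alpha (kappa : R -> R) (x : R) : R := 2 / x * mass kappa x.

(* kappa : R -> R is the radial profile of the circularly symmetric
   surface density, kappa(x) = kappa(||x||).  Conditions (i)-(iv). *)
Definition is_lens (kappa : R -> R) (C1 C2 : R) : Prop :=
  (forall x, 0 < x -> continuous kappa x) /\
  (forall x, 0 < x -> 0 <= kappa x) /\
  0 <= C1 /\
  (0 < C1 -> kappa 0 = / C1 /\ filterlim kappa (at_right 0) (locally (/ C1))) /\
  0 <= C2 /\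
  filterlim (fun x => kappa x * x) (Rbar_locally p_infty) (locally C2) /\
  (forall x, 0 < x -> ex_RInt_gen (fun t => kappa t * t) (at_right 0) (at_point x)) /\
  (forall x, 0 < x -> kappa x < kbar kappa x).

Definition einstein_ring (kappa : R -> R) (xE : R) : Prop :=
  0 < xE /\ alpha kappa xE = xE.

(* Since alpha x = x * kbar x, an Einstein ring is a radius where the mean
   density kbar equals 1.  The enclosed mass has derivative kappa x * x, so
   kbar' x = 2/x * (kappa x - kbar x), which is negative by self-gravitation:
   kbar is strictly decreasing on (0, +oo) and takes the value 1 at most once. *)
From Stdlib Require Import Reals Lra.
From Coquelicot Require Import Coquelicot.
Open Scope R_scope.

Lemma strict_decrease_of_neg_derive (f df : R -> R) (a : R) :
  (forall x, a < x -> is_derive f x (df x)) ->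
  (forall x, a < x -> df x < 0) ->
  forall x y, a < x < y -> f y < f x.
Proof.
  intros Hd Hneg x y [ax xy].
  destruct (MVT_gen f x y df) as [c [[xc cy] Hmvt]].
  - intros z [xz _]; apply Hd; apply Rlt_le_trans with (Rmin x y);
      [apply Rmin_glb_lt|]; lra.
  - intros z [xz _]; apply continuity_pt_filterlim, (@ex_derive_continuous R_AbsRing R_NormedModule).
    exists (df z); apply Hd; apply Rlt_le_trans with (Rmin x y);
      [apply Rmin_glb_lt|]; lra.
  - rewrite Rmin_left in xc by lra.
    assert (df c < 0) by (apply Hneg; lra).
    nra.
Qed.

Section EnclosedMass.

Variable kappa : R -> R.
Hypothesis kappa_cont : forall x, 0 < x -> continuous kappa x.
Hypothesis mass_ex :
  forall x, 0 < x -> ex_RInt_gen (fun t => kappa t * t) (at_right 0) (at_point x).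

Let f := fun t => kappa t * t.

Lemma continuous_mass_density x : 0 < x -> continuous f x.
Proof.
  intros x0; apply (continuous_mult kappa (fun t => t)); [now apply kappa_cont|].
  apply continuous_id.
Qed.

Lemma is_RInt_mass_sub a b :
  0 < a -> 0 < b -> is_RInt f a b (mass kappa b - mass kappa a).
Proof.
  intros a0 b0.
  assert (Hab : ex_RInt f a b).
  { apply (@ex_RInt_continuous R_CompleteNormedModule); intros z Hz.
    apply continuous_mass_density.
    apply Rlt_le_trans with (Rmin a b); [apply Rmin_glb_lt|apply Hz]; lra. }
  assert (Ha : is_RInt_gen f (at_right 0) (at_point a) (mass kappa a)).
  { apply (@RInt_gen_correct R_CompleteNormedModule _ _
      (Proper_StrongProper _ (at_right_proper_filter 0))
      (Proper_StrongProper _ (at_point_filter _))).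
    exact (mass_ex a a0). }
  assert (Hb : mass kappa b = plus (mass kappa a) (RInt f a b)).
  { pose proof (is_RInt_gen_Chasles f a _ _ Ha
      (proj2 (is_RInt_gen_at_point _ _ _ _)
        (@RInt_correct R_CompleteNormedModule _ _ _ Hab))) as Hc.
    exact (@is_RInt_gen_unique R_CompleteNormedModule _ _
      (Proper_StrongProper _ (at_right_proper_filter 0))
      (Proper_StrongProper _ (at_point_filter _)) _ _ Hc). }
  replace (mass kappa b - mass kappa a) with (RInt f a b)
    by (rewrite Hb; symmetry; apply Rplus_minus_l).
  exact (@RInt_correct R_CompleteNormedModule _ _ _ Hab).
Qed.

Lemma is_derive_mass x : 0 < x -> is_derive (mass kappa) x (kappa x * x).
Proof.
  intros x0.
  set (m := mass kappa (x / 2)).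
  apply (is_derive_ext (fun y => m + (mass kappa y - m))).
  { intros y; change (m + (mass kappa y - m) = mass kappa y); ring. }
  replace (kappa x * x) with (0 + f x) by (unfold f; ring).
  apply (is_derive_plus (fun _ => m)).
  { apply (@is_derive_const R_AbsRing R_NormedModule). }
  apply (is_derive_RInt f _ (x / 2)); [|now apply continuous_mass_density].
  assert (hx : 0 < x / 2) by lra.
  exists (mkposreal _ hx); intros y Hy.
  change (Rabs (y - x) < x / 2) in Hy; apply Rabs_def2 in Hy.
  apply is_RInt_mass_sub; lra.
Qed.

Lemma is_derive_kbar x :
  0 < x -> is_derive (kbar kappa) x (2 / x * (kappa x - kbar kappa x)).
Proof.
  intros x0.
  assert (Hinv : is_derive (fun y => 2 / y ^ 2) x (- 4 / x ^ 3)).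
  { auto_derive; [nra|field; lra]. }
  pose proof (is_derive_mult _ _ x _ _ Hinv (is_derive_mass x x0) Rmult_comm) as H.
  unfold kbar.
  replace (2 / x * (kappa x - 2 / x ^ 2 * mass kappa x))
    with (- 4 / x ^ 3 * mass kappa x + 2 / x ^ 2 * (kappa x * x)) by (field; lra).
  exact H.
Qed.

End EnclosedMass.

Lemma kbar_decreasing kappa C1 C2 :
  is_lens kappa C1 C2 -> forall x y, 0 < x < y -> kbar kappa y < kbar kappa x.
Proof.
  intros (Hcont & _ & _ & _ & _ & _ & Hmass & Hself).
  apply (strict_decrease_of_neg_derive _ _ 0 (is_derive_kbar kappa Hcont Hmass)).
  intros x x0.
  assert (0 < 2 / x) by (apply Rdiv_lt_0_compat; lra).
  specialize (Hself x x0); nra.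
Qed.

Lemma alpha_eq_mul_kbar kappa x : alpha kappa x = x * kbar kappa x.
Proof.
  unfold alpha, kbar.
  destruct (Req_dec x 0) as [->|x0].
  - unfold Rdiv; rewrite Rinv_0; ring.
  - field; exact x0.
Qed.

Lemma einstein_ring_kbar kappa x : einstein_ring kappa x <-> 0 < x /\ kbar kappa x = 1.
Proof.
  unfold einstein_ring; rewrite alpha_eq_mul_kbar.
  split; intros [x0 H]; split; [exact x0| |exact x0|].
  - apply (Rmult_eq_reg_l x); [lra|lra].
  - rewrite H; ring.
Qed.

Theorem theorem2 (kappa : R -> R) (C1 C2 : R) :
  is_lens kappa C1 C2 ->
  (exists xE, einstein_ring kappa xE) ->
  exists! xE, einstein_ring kappa xE.
Proof.
  intros Hlens [x1 E1].
  exists x1; split; [exact E1|].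
  intros x2 E2.
  apply einstein_ring_kbar in E1 as [x1_pos K1].
  apply einstein_ring_kbar in E2 as [x2_pos K2].
  destruct (Rtotal_order x1 x2) as [lt|[eq|gt]]; [|exact eq|].
  - pose proof (kbar_decreasing kappa C1 C2 Hlens x1 x2 (conj x1_pos lt)); lra.
  - pose proof (kbar_decreasing kappa C1 C2 Hlens x2 x1 (conj x2_pos gt)); lra.
Qed.
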